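(* Let $k\ge2$ and $n-k$ even. Let $[a_{ij}(x)]$ ($1\le i\le n$, $1\le j\le k$) be an $n\times k$ matrix of polynomials in $x\in\mathbb{R}^{n-k+1}$, and let $p\in\mathbb{R}^{n-k+1}$ be a point where its columns are linearly dependent and $m(p)\ne0$. Let $\bar\lambda=(\bar\lambda_2,\ldots,\bar\lambda_k)$ be the unique vector with $\sum_{j}a_{ij}(p)\lambda_j=0$ for all $i$ (with $\lambda_1=1$). If $\delta(p)\ne0$, then $(\bar\lambda,p)$ is an isolated zero of $F:\mathbb{R}^{k-1}\times\mathbb{R}^{n-k+1}\to\mathbb{R}^n$ and $$\deg_{(\bar\lambda,p)}F=(-1)^{k-1}\operatorname{sgn}\delta(p).$$
   Context: $m(x)=\det[a_{ij}(x)]_{1\le i\le k-1,\,2\le j\le k}$. $F=(F_1,\ldots,F_n)$ with $F_i(\lambda,x)=a_{i1}(x)+\lambda_2a_{i2}(x)+\cdots+\lambda_ka_{ik}(x)$ for $\lambda=(\lambda_2,\ldots,\lambda_k)\in\mathbb{R}^{k-1}$. For $k\le i\le n$, $\Delta_i(x)$ is the determinant of the $k\times k$ matrix formed by rows $1,\ldots,k-1$ and $i$ of $[a_{ij}(x)]$, and $\delta=\det\,\partial(\Delta_k,\ldots,\Delta_n)/\partial(x_1,\ldots,x_{n-k+1})$. $\deg_q$ denotes the local topological degree at an isolated zero $q$, with $\mathbb{R}^{k-1}\times\mathbb{R}^{n-k+1}$ and $\mathbb{R}^n$ standardly oriented. *)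

From Stdlib Require Import Reals ZArith List Arith.
Open Scope R_scope.

Inductive mpoly : Type :=
| PC (c : R)
| PX (i : nat)
| PAdd (p q : mpoly)
| PMul (p q : mpoly)
| POpp (p : mpoly).

Fixpoint peval (x : nat -> R) (p : mpoly) : R :=
  match p with
  | PC c => c
  | PX i => x i
  | PAdd p q => peval x p + peval x q
  | PMul p q => peval x p * peval x q
  | POpp p => - peval x p
  end.

Fixpoint pderiv (i : nat) (p : mpoly) : mpoly :=
  match p with
  | PC _ => PC 0
  | PX j => if Nat.eqb i j then PC 1 else PC 0
  | PAdd p q => PAdd (pderiv i p) (pderiv i q)
  | PMul p q => PAdd (PMul (pderiv i p) q) (PMul p (pderiv i q))
  | POpp p => POpp (pderiv i p)
  end.

Fixpoint prename (f : nat -> nat) (p : mpoly) : mpoly :=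
  match p with
  | PC c => PC c
  | PX j => PX (f j)
  | PAdd p q => PAdd (prename f p) (prename f q)
  | PMul p q => PMul (prename f p) (prename f q)
  | POpp p => POpp (prename f p)
  end.

Fixpoint poly_in (N : nat) (p : mpoly) : Prop :=
  match p with
  | PC _ => True
  | PX j => (j < N)%nat
  | PAdd p q => poly_in N p /\ poly_in N q
  | PMul p q => poly_in N p /\ poly_in N q
  | POpp p => poly_in N p
  end.

(** generic finite sums and determinants (Laplace expansion along row 0),
    matrices are functions nat -> nat -> T, indices 0-based *)
Fixpoint gsum {T : Type} (add : T -> T -> T) (zero : T) (n : nat) (f : nat -> T) : T :=
  match n with
  | O => zero
  | S m => add (gsum add zero m f) (f m)
  end.

Definition minor {T : Type} (A : nat -> nat -> T) (j : nat) : nat -> nat -> T :=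
  fun r c => A (S r) (if Nat.ltb c j then c else S c).

Fixpoint gdet {T : Type} (add mul : T -> T -> T) (opp : T -> T) (zero one : T)
  (n : nat) (A : nat -> nat -> T) : T :=
  match n with
  | O => one
  | S m => gsum add zero (S m) (fun j =>
             let t := mul (A O j) (gdet add mul opp zero one m (minor A j)) in
             if Nat.even j then t else opp t)
  end.

Definition Rsum (n : nat) (f : nat -> R) : R := gsum Rplus 0 n f.
Definition Rdet (n : nat) (A : nat -> nat -> R) : R := gdet Rplus Rmult Ropp 0 1 n A.
Definition Pdet (n : nat) (A : nat -> nat -> mpoly) : mpoly :=
  gdet PAdd PMul POpp (PC 0) (PC 1) n A.

Definition sgnZ (x : R) : Z :=
  if Rlt_dec 0 x then 1%Z else if Rlt_dec x 0 then (-1)%Z else 0%Z.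

(** points of R^n are represented by nat -> R, only coordinates < n matter *)
Definition eqv (n : nat) (z w : nat -> R) : Prop := forall t, (t < n)%nat -> z t = w t.
Definition dist2 (n : nat) (z w : nat -> R) : R := Rsum n (fun t => (z t - w t) ^ 2).

(** a polynomial map G : R^n -> R^n has components G 0, ..., G (n-1) *)
Definition is_zero_of (n : nat) (G : nat -> mpoly) (z : nat -> R) : Prop :=
  forall i, (i < n)%nat -> peval z (G i) = 0.

Definition solves (n : nat) (G : nat -> mpoly) (y z : nat -> R) : Prop :=
  forall i, (i < n)%nat -> peval z (G i) = y i.

Definition jac (n : nat) (G : nat -> mpoly) (z : nat -> R) : R :=
  Rdet n (fun i j => peval z (pderiv j (G i))).

Definition isolated_zero (n : nat) (G : nat -> mpoly) (q : nat -> R) : Prop :=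
  is_zero_of n G q /\
  exists r, 0 < r /\
    forall z, dist2 n z q < r ^ 2 -> is_zero_of n G z -> eqv n z q.

(** Local (Brouwer) degree of G at the isolated zero q, analytic definition:
    choose a ball B(q,r) whose closure contains no other zero; for every
    regular value y of G on B(q,r) sufficiently close to 0, the degree is
    the sum over the (finitely many) solutions z in B(q,r) of G z = y of
    sgn det DG(z). *)
Definition local_degree (n : nat) (G : nat -> mpoly) (q : nat -> R) (d : Z) : Prop :=
  exists r, 0 < r /\
    (forall z, dist2 n z q <= r ^ 2 -> is_zero_of n G z -> eqv n z q) /\
    exists eps, 0 < eps /\
      forall y : nat -> R,
        dist2 n y (fun _ => 0) < eps ^ 2 ->
        (forall z, dist2 n z q < r ^ 2 -> solves n G y z -> jac n G z <> 0) ->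
        forall zs : list (nat -> R),
          (forall z, (dist2 n z q < r ^ 2 /\ solves n G y z) <->
                     exists w, In w zs /\ eqv n z w) ->
          ForallOrdPairs (fun u v => ~ eqv n u v) zs ->
          fold_right (fun z acc => (sgnZ (jac n G z) + acc)%Z) 0%Z zs = d.

(** ---- the objects of the paper (0-based indices) ----
    a i j, i < n, j < k : entries of the n x k polynomial matrix in
    x = (X_0, ..., X_(n-k)).  *)

(** m(x) = det [a_ij]_{rows 1..k-1, cols 2..k} *)
Definition m_poly (k : nat) (a : nat -> nat -> mpoly) : mpoly :=
  Pdet (k - 1) (fun r c => a r (S c)).

(** Delta_i (paper index i in k..n, here 0-based row index i in k-1..n-1):
    det of the k x k matrix of rows 1..k-1 and row i *)
Definition Delta (k : nat) (a : nat -> nat -> mpoly) (i : nat) : mpoly :=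
  Pdet k (fun r c => a (if Nat.ltb r (k - 1) then r else i) c).

(** delta = det d(Delta_k,...,Delta_n)/d(x_1,...,x_(n-k+1)) *)
Definition delta_poly (n k : nat) (a : nat -> nat -> mpoly) : mpoly :=
  Pdet (n - k + 1) (fun r c => pderiv c (Delta k a (k - 1 + r))).

(** F_i(lambda, x) as a polynomial in n variables: variables X_0..X_(k-2)
    are lambda_2..lambda_k, variables X_(k-1)..X_(n-1) are x_1..x_(n-k+1). *)
Definition F_poly (k : nat) (a : nat -> nat -> mpoly) (i : nat) : mpoly :=
  let sh := prename (fun t => (t + (k - 1))%nat) in
  PAdd (sh (a i O))
       (gsum PAdd (PC 0) (k - 1) (fun j => PMul (PX j) (sh (a i (S j))))).

(** the point (lambda, p) of R^(k-1) x R^(n-k+1) = R^n *)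
Definition join_pt (k : nat) (lam p : nat -> R) : nat -> R :=
  fun t => if Nat.ltb t (k - 1) then lam t else p (t - (k - 1))%nat.

(** Write q = (λ̄, p) and J for the Jacobian matrix of F at q.  Its first
  k-1 columns are the columns a_{·,2..k}(p), the remaining n-k+1 columns are
  B_{i,l} = ∂_l a_{i1}(p) + Σ_j λ̄_j ∂_l a_{ij}(p); so the leading (k-1)×(k-1)
  block of J has determinant m(p) ≠ 0.  The proof has three independent parts.

  - Linear algebra.  With S the Schur complement of that block,
    det J = m(p) · det S.  Differentiating Δ_i row by row and using that
    the columns of the rows 1..k-1 and i are annihilated by (1, λ̄), one gets
    ∂_l Δ_i(p) = (-1)^(k-1) m(p) S_{i,l}, hence
    δ(p) = ((-1)^(k-1) m(p))^(n-k+1) det S.  As n-k+1 is odd,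
    sgn δ(p) = (-1)^(k-1) sgn det J; in particular det J ≠ 0.
  - Analysis.  A zero q of a polynomial map G : R^N -> R^N with
    det DG(q) ≠ 0 is isolated and deg_q G = sgn det DG(q): near q the
    Newton map z ↦ z - DG(q)^{-1}(G z - y) is a 1/2-contraction, so every
    small y has exactly one preimage near q, at which det DG has the sign
    of det DG(q).
  - Bookkeeping: the formal partial derivatives of the syntactic
    polynomials F_i, Δ_i and the determinants involved.

  The hypothesis that the columns of a(p) are dependent only serves to
  define λ̄, which the statement supplies directly. *)

From Pilot Require Import Defs.
From Stdlib Require Import Reals ZArith List Lra Lia Psatz.
From mathcomp Require ssreflect ssrfun ssrbool eqtype ssrnat fintype.
From mathcomp Require bigop ssralg matrix Rstruct.
Open Scope R_scope.

(** ** Finite sums *)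

Lemma Rsum_S n f : Rsum (S n) f = Rsum n f + f n.
Proof. reflexivity. Qed.

Lemma Rsum_ext n f g : (forall i, (i < n)%nat -> f i = g i) -> Rsum n f = Rsum n g.
Proof.
  induction n as [|n IH]; intros H; [reflexivity|].
  rewrite !Rsum_S, IH by (intros; apply H; lia). rewrite H by lia; reflexivity.
Qed.

Lemma Rsum_plus n f g : Rsum n (fun i => f i + g i) = Rsum n f + Rsum n g.
Proof. induction n as [|n IH]; [unfold Rsum; simpl; ring|]. rewrite !Rsum_S, IH; ring. Qed.

Lemma Rsum_scal n c f : Rsum n (fun i => c * f i) = c * Rsum n f.
Proof. induction n as [|n IH]; [unfold Rsum; simpl; ring|]. rewrite !Rsum_S, IH; ring. Qed.

Lemma Rsum_opp n f : Rsum n (fun i => - f i) = - Rsum n f.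
Proof. induction n as [|n IH]; [unfold Rsum; simpl; ring|]. rewrite !Rsum_S, IH; ring. Qed.

Lemma Rsum_minus n f g : Rsum n (fun i => f i - g i) = Rsum n f - Rsum n g.
Proof. induction n as [|n IH]; [unfold Rsum; simpl; ring|]. rewrite !Rsum_S, IH; ring. Qed.

Lemma Rsum_const n c : Rsum n (fun _ => c) = INR n * c.
Proof. induction n as [|n IH]; [unfold Rsum; simpl; ring|]. rewrite Rsum_S, IH, S_INR; ring. Qed.

Lemma Rsum_zero n f : (forall i, (i < n)%nat -> f i = 0) -> Rsum n f = 0.
Proof. intros H. rewrite (Rsum_ext n f (fun _ => 0)), Rsum_const by auto. ring. Qed.

Lemma Rsum_S_l n f : Rsum (S n) f = f 0%nat + Rsum n (fun i => f (S i)).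
Proof. induction n as [|n IH]; [unfold Rsum; simpl; ring|]. rewrite Rsum_S, IH, Rsum_S; ring. Qed.

Lemma Rsum_swap n m f :
  Rsum n (fun i => Rsum m (fun j => f i j)) = Rsum m (fun j => Rsum n (fun i => f i j)).
Proof.
  induction n as [|n IH].
  - symmetry; apply Rsum_zero; reflexivity.
  - rewrite Rsum_S, IH, <- Rsum_plus. apply Rsum_ext; reflexivity.
Qed.

Lemma Rsum_delta n j f : (j < n)%nat ->
  Rsum n (fun i => if Nat.eqb i j then f i else 0) = f j.
Proof.
  induction n as [|n IH]; intros H; [lia|].
  rewrite Rsum_S. destruct (Nat.eqb_spec n j) as [->|Hn].
  - rewrite Rsum_zero; [ring|]. intros i Hi. destruct (Nat.eqb_spec i j); [lia|reflexivity].
  - rewrite IH by lia. ring.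
Qed.

Lemma Rsum_le n f g : (forall i, (i < n)%nat -> f i <= g i) -> Rsum n f <= Rsum n g.
Proof.
  induction n as [|n IH]; intros H; [unfold Rsum; simpl; lra|].
  rewrite !Rsum_S. assert (f n <= g n) by (apply H; lia).
  assert (Rsum n f <= Rsum n g) by (apply IH; intros; apply H; lia). lra.
Qed.

Lemma Rsum_abs n f : Rabs (Rsum n f) <= Rsum n (fun i => Rabs (f i)).
Proof.
  induction n as [|n IH]; [unfold Rsum; simpl; rewrite Rabs_R0; lra|].
  rewrite !Rsum_S. eapply Rle_trans; [apply Rabs_triang|lra].
Qed.

Lemma Rsum_nonneg n f : (forall i, (i < n)%nat -> 0 <= f i) -> 0 <= Rsum n f.
Proof. intros H. rewrite <- (Rsum_zero n (fun _ => 0)) by auto. apply Rsum_le; auto. Qed.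

Lemma Rsum_term_le n f j : (forall i, (i < n)%nat -> 0 <= f i) -> (j < n)%nat -> f j <= Rsum n f.
Proof.
  induction n as [|n IH]; intros H Hj; [lia|].
  rewrite Rsum_S. assert (0 <= f n) by (apply H; lia).
  destruct (Nat.eq_dec j n) as [->|Hne].
  - assert (0 <= Rsum n f) by (apply Rsum_nonneg; intros; apply H; lia). lra.
  - assert (f j <= Rsum n f) by (apply IH; [intros; apply H|]; lia). lra.
Qed.

(** ** Syntactic polynomials *)

Lemma peval_ext x y P : (forall i, x i = y i) -> peval x P = peval y P.
Proof. intros H; induction P; simpl; congruence. Qed.

Lemma peval_gsum x n f : peval x (gsum PAdd (PC 0) n f) = Rsum n (fun i => peval x (f i)).
Proof. induction n as [|n IH]; [reflexivity|]. simpl. rewrite IH. reflexivity. Qed.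

Lemma pderiv_gsum l n f :
  pderiv l (gsum PAdd (PC 0) n f) = gsum PAdd (PC 0) n (fun i => pderiv l (f i)).
Proof. induction n as [|n IH]; [reflexivity|]. simpl. rewrite IH. reflexivity. Qed.

Lemma peval_prename x f P : peval x (prename f P) = peval (fun u => x (f u)) P.
Proof. induction P; simpl; congruence. Qed.

Lemma pderiv_prename_missed x f t P :
  (forall j, f j <> t) -> peval x (pderiv t (prename f P)) = 0.
Proof.
  intros Hf. induction P; simpl; try rewrite IHP1, IHP2; try rewrite IHP; try ring.
  destruct (Nat.eqb_spec t (f i)) as [E|]; [destruct (Hf i); auto|reflexivity].
Qed.

Lemma pderiv_prename_shift l K P :
  pderiv (l + K) (prename (fun u => (u + K)%nat) P) = prename (fun u => (u + K)%nat) (pderiv l P).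
Proof.
  induction P; simpl; try congruence.
  destruct (Nat.eqb_spec (l + K) (i + K)), (Nat.eqb_spec l i); try lia; reflexivity.
Qed.

Lemma poly_in_prename M M' f P :
  poly_in M P -> (forall j, (j < M)%nat -> (f j < M')%nat) -> poly_in M' (prename f P).
Proof. intros H Hf; induction P; simpl in *; intuition. Qed.

Lemma poly_in_gsum M n f :
  (forall i, (i < n)%nat -> poly_in M (f i)) -> poly_in M (gsum PAdd (PC 0) n f).
Proof. induction n as [|n IH]; intros H; simpl; auto. split; auto. Qed.

Lemma poly_in_pderiv M t P : poly_in M P -> poly_in M (pderiv t P).
Proof. induction P; simpl; intuition. destruct (Nat.eqb t i); exact I. Qed.

(** ** Determinants by Laplace expansion *)

Definition sg (j : nat) : R := if Nat.even j then 1 else -1.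

Lemma sg_if j t : (if Nat.even j then t else - t) = sg j * t.
Proof. unfold sg; destruct (Nat.even j); ring. Qed.

Lemma Rdet_S m A : Rdet (S m) A =
  Rsum (S m) (fun j => sg j * (A O j * Rdet m (minor A j))).
Proof.
  transitivity (Rsum (S m) (fun j =>
    let t := A O j * Rdet m (minor A j) in if Nat.even j then t else - t)); [reflexivity|].
  apply Rsum_ext; intros j _. apply sg_if.
Qed.

Lemma Rdet_1 A : Rdet 1 A = A 0%nat 0%nat.
Proof. unfold Rdet; simpl. ring. Qed.

Lemma Rdet_ext n : forall A B,
  (forall i j, (i < n)%nat -> (j < n)%nat -> A i j = B i j) -> Rdet n A = Rdet n B.
Proof.
  induction n as [|n IH]; intros A B H; [reflexivity|].
  rewrite !Rdet_S. apply Rsum_ext; intros j Hj.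
  rewrite (IH (minor A j) (minor B j)), H by (lia || (intros r c Hr Hc; unfold minor;
    apply H; destruct (Nat.ltb c j); lia)). reflexivity.
Qed.

Lemma Rdet_scal n : forall c A, Rdet n (fun i j => c * A i j) = c ^ n * Rdet n A.
Proof.
  induction n as [|n IH]; intros c A; [unfold Rdet; simpl; ring|].
  rewrite !Rdet_S, <- Rsum_scal. apply Rsum_ext; intros j _.
  change (minor (fun i j0 => c * A i j0) j) with (fun r s => c * minor A j r s).
  rewrite IH. simpl. ring.
Qed.

Lemma Pdet_S m A : Pdet (S m) A = gsum PAdd (PC 0) (S m) (fun j =>
  let t := PMul (A O j) (Pdet m (minor A j)) in if Nat.even j then t else POpp t).
Proof. reflexivity. Qed.

Lemma peval_Pdet n : forall A x, peval x (Pdet n A) = Rdet n (fun i j => peval x (A i j)).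
Proof.
  induction n as [|n IH]; intros A x; [reflexivity|].
  rewrite Pdet_S, peval_gsum, Rdet_S.
  apply Rsum_ext; intros j _. rewrite <- sg_if.
  destruct (Nat.even j); simpl; rewrite IH; reflexivity.
Qed.

Lemma poly_in_Pdet M n : forall A,
  (forall i j, (i < n)%nat -> (j < n)%nat -> poly_in M (A i j)) -> poly_in M (Pdet n A).
Proof.
  induction n as [|n IH]; intros A H; [exact I|].
  rewrite Pdet_S. apply poly_in_gsum. intros j Hj.
  assert (poly_in M (PMul (A 0%nat j) (Pdet n (minor A j)))).
  { split; [apply H; lia|]. apply IH. intros r c Hr Hc. unfold minor. apply H; [lia|].
    destruct (Nat.ltb c j); lia. }
  destruct (Nat.even j); simpl in *; tauto.
Qed.

Lemma peval_pderiv_Pdet n : forall A x l,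
  peval x (pderiv l (Pdet n A)) =
  Rsum n (fun s => Rdet n (fun i j =>
    if Nat.eqb i s then peval x (pderiv l (A i j)) else peval x (A i j))).
Proof.
  induction n as [|n IH]; intros A x l; [reflexivity|].
  rewrite Rsum_S_l; cbv beta. rewrite Rdet_S, Pdet_S, pderiv_gsum, peval_gsum.
  set (dA := fun i j => peval x (pderiv l (A i j))).
  set (vA := fun i j => peval x (A i j)).
  transitivity (Rsum (S n) (fun j => sg j * (dA 0%nat j * Rdet n (minor vA j)))
     + Rsum (S n) (fun j => sg j * (vA 0%nat j * Rsum n (fun s => Rdet n (fun r c =>
          if Nat.eqb r s then minor dA j r c else minor vA j r c))))).
  { rewrite <- Rsum_plus. apply Rsum_ext; intros j _. rewrite <- !sg_if.
    destruct (Nat.even j); simpl; rewrite peval_Pdet, IH; unfold dA, vA, minor; ring. }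
  f_equal.
  transitivity (Rsum (S n) (fun j => Rsum n (fun s => sg j * (vA 0%nat j * Rdet n (fun r c =>
          if Nat.eqb r s then minor dA j r c else minor vA j r c))))).
  { apply Rsum_ext; intros j _. rewrite <- !Rsum_scal. reflexivity. }
  rewrite Rsum_swap. apply Rsum_ext; intros s _. rewrite Rdet_S.
  apply Rsum_ext; intros j _. reflexivity.
Qed.

(** ** Matrix identities *)

Module Matrices.
Import ssreflect ssrfun ssrbool eqtype ssrnat fintype bigop ssralg matrix Rstruct.
Import GRing.Theory.
Local Open Scope ring_scope.

Lemma RsumE n (f : nat -> R) : Rsum n f = \sum_(i < n) f i.
Proof. elim: n => [|n IH]; first by rewrite big_ord0. by rewrite Rsum_S big_ord_recr /= IH. Qed.

Lemma eqb_eqn (i j : nat) : Nat.eqb i j = (i == j).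
Proof. by case: (Nat.eqb_spec i j) => [->|H]; [rewrite eqxx | case: eqP]. Qed.

Lemma ltb_ltn (i j : nat) : Nat.ltb i j = (i < j)%N.
Proof.
  case: (Nat.ltb_spec i j) => H; apply/esym; first by apply/ssrnat.ltP.
  by apply/negbTE; rewrite -leqNgt; apply/ssrnat.leP.
Qed.

Lemma even_odd j : Nat.even j = ~~ odd j.
Proof. elim: j => [|j IH] //. by rewrite Nat.even_succ -Nat.negb_even IH /=; case: (odd j). Qed.

Lemma sgE j : sg j = (-1) ^+ j.
Proof. by rewrite /sg even_odd -signr_odd; case: (odd j); rewrite ?expr1 ?expr0. Qed.

Lemma RdetE n : forall A : nat -> nat -> R, Rdet n A = \det (\matrix_(i < n, j < n) A i j).
Proof.
  elim: n => [|n IH] A; first by rewrite det_mx00.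
  rewrite Rdet_S RsumE (expand_det_row _ ord0). apply: eq_bigr => j _.
  rewrite /cofactor.
  have -> : row' ord0 (col' j (\matrix_(i < n.+1, j0 < n.+1) A i j0)) =
            \matrix_(r < n, c < n) minor A j r c.
    apply/matrixP => r c; rewrite !mxE /minor /= /bump ltb_ltn leq0n add1n.
    by case: (ltnP c j).
  by rewrite -IH mxE sgE /= add0n !RmultE mulrCA mulrA.
Qed.

Lemma Rdet_unit n (A : nat -> nat -> R) :
  Rdet n A <> 0%R -> \matrix_(i < n, j < n) A i j \in unitmx.
Proof. by move=> HA; rewrite unitmxE unitfE -RdetE; apply/eqP. Qed.

Lemma inverse_exists N (J : nat -> nat -> R) : Rdet N J <> 0%R ->
  exists M : nat -> nat -> R,
   (forall i j, (i < N)%coq_nat -> (j < N)%coq_nat ->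
      Rsum N (fun t => Rmult (M i t) (J t j)) = if Nat.eqb i j then R1 else R0) /\
   (forall i j, (i < N)%coq_nat -> (j < N)%coq_nat ->
      Rsum N (fun t => Rmult (J i t) (M t j)) = if Nat.eqb i j then R1 else R0).
Proof.
  case: N => [|n] HJ; first by exists (fun _ _ => 0); split => i j Hi; lia.
  have Hu := Rdet_unit _ _ HJ; set Jm := \matrix_(i < n.+1, j < n.+1) J i j in Hu.
  exists (fun i j => invmx Jm (inord i) (inord j)).
  have kron i j : (i < n.+1)%coq_nat -> (j < n.+1)%coq_nat ->
      (if Nat.eqb i j then 1 else 0) = ((inord i == inord j :> 'I_n.+1)%:R : R).
    move=> /ssrnat.ltP Hi /ssrnat.ltP Hj.
    by rewrite -(inj_eq val_inj) /= !inordK // eqb_eqn; case: (i == j).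
  split=> i j Hi Hj; rewrite RsumE kron //.
  - move: (mulVmx Hu) => /matrixP/(_ (inord i) (inord j)); rewrite !mxE => <-.
    by apply: eq_bigr => t _; rewrite !mxE inord_val; move/ssrnat.ltP: Hj => Hj; rewrite inordK.
  - move: (mulmxV Hu) => /matrixP/(_ (inord i) (inord j)); rewrite !mxE => <-.
    by apply: eq_bigr => t _; rewrite !mxE inord_val; move/ssrnat.ltP: Hi => Hi; rewrite inordK.
Qed.

Definition shift_mx K (c : nat -> R) : 'M[R]_K.+1 :=
  \matrix_(i, j) (if (j < K)%N then ((i == j.+1 :> nat)%:R) else c i).

Lemma det_shift_mx K c : c 0%N = 1 -> \det (shift_mx K c) = (-1) ^+ K.
Proof.
  move=> Hc0; rewrite (expand_det_row _ ord0) big_ord_recr /= big1 => [|j _]; last first.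
    by rewrite !mxE /= ltn_ord mul0r.
  rewrite add0r !mxE /= ltnn Hc0 mul1r /cofactor add0n.
  have -> : row' ord0 (col' ord_max (shift_mx K c)) = 1%:M.
    apply/matrixP => i j; rewrite !mxE /= /bump leq0n (leqNgt K j) ltn_ord /= add0n.
    by rewrite ltn_ord.
  by rewrite det1 mulr1.
Qed.

Section RowReplacement.
Variables (K : nat) (X D : nat -> nat -> R) (c : nat -> R).
Hypothesis c0 : c 0%N = 1.
Hypothesis Xc : forall u, (u <= K)%coq_nat -> Rsum K.+1 (fun v => Rmult (X u v) (c v)) = R0.

Let Y (s : nat) : 'M[R]_K.+1 := \matrix_(u, v) (if Nat.eqb u s then D u v else X u v).
Let Dc (u : nat) : R := Rsum K.+1 (fun w => Rmult (D u w) (c w)).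
Let Z : 'M[R]_K.+1 := \matrix_(u, v) (if Nat.ltb v K then X u v.+1 else Dc u).

(** multiplying Y s by the shift matrix kills the last column except at row s *)
Lemma det_row_replaced (s : 'I_K.+1) : \det (Y s) * (-1) ^+ K = Dc s * cofactor Z s ord_max.
Proof.
  rewrite -(det_shift_mx K c c0) -det_mulmx (expand_det_col _ ord_max) (bigD1 s) //=.
  rewrite big1 => [|u Hu]; last first.
    rewrite !mxE.
    have -> : \sum_j Y s u j * shift_mx K c j ord_max = Rsum K.+1 (fun v => Rmult (X u v) (c v)).
      by rewrite RsumE; apply: eq_bigr => w _; rewrite !mxE /= ltnn eqb_eqn val_eqE (negbTE Hu).
    by rewrite Xc ?mul0r //; apply/ssrnat.leP; rewrite -ltnS ltn_ord.
  rewrite addr0 !mxE; congr (_ * _).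
    by rewrite /Dc RsumE; apply: eq_bigr => w _; rewrite !mxE /= ltnn eqb_eqn eqxx.
  rewrite /cofactor; congr (_ * \det _); apply/matrixP => i j.
  have Hj : (j < K)%N := ltn_ord j.
  have HbK : bump K j = j by rewrite /bump leqNgt Hj.
  rewrite !mxE lift_max ltb_ltn Hj (bigD1 (lift ord0 j)) //= big1 => [|w Hw]; last first.
    rewrite !mxE /= HbK Hj; case: eqP => [H|]; last by rewrite mulr0.
    by case/eqP: Hw; apply/val_inj.
  rewrite !mxE /= HbK Hj eqxx mulr1 addr0 eqb_eqn.
  by rewrite [bump s i == s]eq_sym (negbTE (neq_bump _ _)).
Qed.

Lemma sum_row_replaced_det :
  Rsum K.+1 (fun s => Rdet K.+1 (fun u v => if Nat.eqb u s then D u v else X u v)) =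
  Rmult (sg K) (Rdet K.+1 (fun u v => if Nat.ltb v K then X u v.+1 else Dc u)).
Proof.
  rewrite RsumE RdetE sgE RmultE (expand_det_col _ ord_max) mulr_sumr; apply: eq_bigr => s _.
  rewrite RdetE.
  have -> : \det (\matrix_(u < K.+1, v < K.+1) (if Nat.eqb u s then D u v else X u v))
            = (-1) ^+ K * (Dc s * cofactor Z s ord_max).
    by rewrite -det_row_replaced mulrCA -expr2 -exprM mulnC exprM sqrrN !expr1n mulr1.
  by rewrite !mxE ltb_ltn ltnn.
Qed.
End RowReplacement.

Definition schur_complement K (G : nat -> nat -> R) (r l : nat) : R :=
  G (K + r)%N (K + l)%N -
  \sum_(v < K) (\sum_(u < K) G (K + r)%N u * invmx (\matrix_(i < K, j < K) G i j) u v)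
    * G v (K + l)%N.

Lemma matrix_block_split m n (f : nat -> nat -> R) :
  \matrix_(i < m + n, j < m + n) f i j =
  block_mx (\matrix_(i < m, j < m) f i j) (\matrix_(i < m, j < n) f i (m + j)%N)
           (\matrix_(i < n, j < m) f (m + i)%N j) (\matrix_(i < n, j < n) f (m + i)%N (m + j)%N).
Proof.
  apply/matrixP => i j; rewrite -(splitK i) -(splitK j).
  case: (split i) => a; case: (split j) => b /=;
  by rewrite ?(block_mxEul, block_mxEur, block_mxEdl, block_mxEdr) !mxE.
Qed.

Lemma det_schur K N (G : nat -> nat -> R) : Rdet K G <> R0 ->
  Rdet (K + N)%coq_nat G = Rmult (Rdet K G) (Rdet N (schur_complement K G)).
Proof.
  move=> HG; have Hu := Rdet_unit _ _ HG.
  rewrite !RdetE RmultE matrix_block_split.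
  set A := \matrix_(i < K, j < K) G i j in Hu *.
  set B := \matrix_(i < K, j < N) G i (K + j)%N.
  set C := \matrix_(i < N, j < K) G (K + i)%N j.
  set E := \matrix_(i < N, j < N) G (K + i)%N (K + j)%N.
  have elim_block : block_mx A B C E *m block_mx 1%:M (- (invmx A *m B)) 0 1%:M
                    = block_mx A 0 C (E - C *m invmx A *m B).
    rewrite mulmx_block !mulmx1 !mulmx0 !addr0 !mulmxN mulmxA mulmxV // mul1mx addNr.
    by rewrite addrC mulmxA.
  have := congr1 determinant elim_block.
  rewrite det_mulmx det_ublock !det1 !mulr1 => ->; rewrite det_lblock.
  congr (_ * \det _); apply/matrixP => r l.
  rewrite !mxE /schur_complement; congr (_ - _); apply: eq_bigr => v _.
  by rewrite !mxE; congr (_ * _); apply: eq_bigr => u _; rewrite !mxE.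
Qed.

Definition bordered K (G : nat -> nat -> R) (r l : nat) (i j : nat) : R :=
  G (if Nat.ltb i K then i else (K + r)%coq_nat) (if Nat.ltb j K then j else (K + l)%coq_nat).

Lemma det_bordered K (G : nat -> nat -> R) r l : Rdet K G <> R0 ->
  Rdet K.+1 (bordered K G r l) = Rmult (Rdet K G) (schur_complement K G r l).
Proof.
  move=> HG.
  have same_block : forall i j, (i < K)%coq_nat -> (j < K)%coq_nat -> bordered K G r l i j = G i j.
    by move=> i j /ssrnat.ltP Hi /ssrnat.ltP Hj; rewrite /bordered !ltb_ltn Hi Hj.
  have Hdet := Rdet_ext K _ _ same_block.
  rewrite -addn1 (det_schur K 1); last by rewrite Hdet.
  rewrite Hdet Rdet_1 /schur_complement; congr (Rmult _ _).
  have -> : \matrix_(i < K, j < K) bordered K G r l i j = \matrix_(i < K, j < K) G i j.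
    by apply/matrixP => i j; rewrite !mxE same_block //; apply/ssrnat.ltP.
  rewrite /bordered !ltb_ltn !addn0 ltnn; congr (_ - _).
  apply: eq_bigr => v _; rewrite ltb_ltn ltn_ord; congr (_ * _).
  by apply: eq_bigr => u _; rewrite ltb_ltn ltn_ord.
Qed.
End Matrices.

(** ** The l1 norm on R^N *)

Definition nrm (N : nat) (v : nat -> R) : R := Rsum N (fun t => Rabs (v t)).
Definition dv (z w : nat -> R) : nat -> R := fun t => z t - w t.

Lemma nrm_nonneg N v : 0 <= nrm N v.
Proof. apply Rsum_nonneg; intros; apply Rabs_pos. Qed.

Lemma nrm_ext N v w : (forall t, (t < N)%nat -> v t = w t) -> nrm N v = nrm N w.
Proof. intros H; apply Rsum_ext; intros t Ht; rewrite H; auto. Qed.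

Lemma nrm_sym N z w : nrm N (dv z w) = nrm N (dv w z).
Proof. apply Rsum_ext; intros; apply Rabs_minus_sym. Qed.

Lemma nrm_self N z : nrm N (dv z z) = 0.
Proof. apply Rsum_zero; intros; unfold dv; rewrite Rminus_diag; apply Rabs_R0. Qed.

Lemma nrm_tri N z w u : nrm N (dv z u) <= nrm N (dv z w) + nrm N (dv w u).
Proof.
  unfold nrm. rewrite <- Rsum_plus. apply Rsum_le; intros. unfold dv.
  replace (z i - u i) with ((z i - w i) + (w i - u i)) by ring. apply Rabs_triang.
Qed.

Lemma coord_le_nrm N v t : (t < N)%nat -> Rabs (v t) <= nrm N v.
Proof. intros; apply (Rsum_term_le N (fun t => Rabs (v t))); auto using Rabs_pos. Qed.

Lemma nrm_zero_eqv N z w : nrm N (dv z w) <= 0 -> eqv N z w.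
Proof.
  intros H t Ht. pose proof (coord_le_nrm N (dv z w) t Ht). pose proof (Rabs_pos (dv z w t)).
  unfold dv in *. destruct (Req_dec (z t - w t) 0) as [E|E]; [lra|].
  pose proof (Rabs_pos_lt _ E). lra.
Qed.

Lemma lin_bound N a v : Rabs (Rsum N (fun t => a t * v t)) <= Rsum N (fun t => Rabs (a t)) * nrm N v.
Proof.
  eapply Rle_trans; [apply Rsum_abs|]. unfold nrm. rewrite <- Rsum_scal.
  apply Rsum_le; intros. rewrite Rabs_mult. apply Rmult_le_compat_r; [apply Rabs_pos|].
  apply (Rsum_term_le N (fun t => Rabs (a t))); auto using Rabs_pos.
Qed.

Definition mx_bound N (M : nat -> nat -> R) := Rsum N (fun t => Rsum N (fun i => Rabs (M t i))).

Lemma mx_bound_nonneg N M : 0 <= mx_bound N M.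
Proof. apply Rsum_nonneg; intros; apply Rsum_nonneg; intros; apply Rabs_pos. Qed.

Lemma mx_bound_spec N M u : nrm N (fun t => Rsum N (fun i => M t i * u i)) <= mx_bound N M * nrm N u.
Proof.
  unfold nrm at 1, mx_bound. rewrite Rmult_comm, <- Rsum_scal.
  apply Rsum_le; intros t _. rewrite Rmult_comm. apply lin_bound.
Qed.

Lemma nrm_le_of_dist2 N z w r : 0 <= r -> dist2 N z w <= r ^ 2 -> nrm N (dv z w) <= INR N * r.
Proof.
  intros Hr H. rewrite <- Rsum_const. apply Rsum_le. intros t Ht.
  assert ((z t - w t) ^ 2 <= r ^ 2).
  { eapply Rle_trans; [|apply H]. apply (Rsum_term_le N (fun t => (z t - w t) ^ 2)); auto.
    intros; apply pow2_ge_0. }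
  unfold dv. rewrite <- pow2_abs in H0. pose proof (Rabs_pos (z t - w t)). nra.
Qed.

Lemma dist2_le_nrm N z w : dist2 N z w <= (nrm N (dv z w)) ^ 2.
Proof.
  unfold dist2, nrm, dv. induction N as [|N IH]; [unfold Rsum; simpl; lra|].
  rewrite !Rsum_S. pose proof (Rsum_nonneg N (fun t => Rabs (z t - w t)) (fun t _ => Rabs_pos _)).
  pose proof (Rabs_pos (z N - w N)). rewrite <- (pow2_abs (z N - w N)). nra.
Qed.

(** ** Quadratic Taylor estimate for polynomials *)

Definition taylor_bound N q P C := forall z w, nrm N (dv z q) <= 1 -> nrm N (dv w q) <= 1 ->
  Rabs (peval z P - peval w P - Rsum N (fun t => peval q (pderiv t P) * (z t - w t)))
   <= C * (nrm N (dv z q) + nrm N (dv w q)) * nrm N (dv z w).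

Definition gradn N q P := Rsum N (fun t => Rabs (peval q (pderiv t P))).

Lemma gradn_nonneg N q P : 0 <= gradn N q P.
Proof. apply Rsum_nonneg; intros; apply Rabs_pos. Qed.

Lemma taylor_lipschitz N q P C : 0 <= C -> taylor_bound N q P C ->
  forall z w, nrm N (dv z q) <= 1 -> nrm N (dv w q) <= 1 ->
  Rabs (peval z P - peval w P) <= (gradn N q P + 2 * C) * nrm N (dv z w).
Proof.
  intros HC HT z w Hz Hw. specialize (HT z w Hz Hw).
  pose proof (lin_bound N (fun t => peval q (pderiv t P)) (dv z w)) as HL.
  cbv beta in HL. set (L := Rsum N (fun t => peval q (pderiv t P) * (z t - w t))) in *.
  change (Rsum N (fun t => peval q (pderiv t P) * dv z w t)) with L in HL. fold (gradn N q P) in HL.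
  pose proof (nrm_nonneg N (dv z w)).
  assert (C * (nrm N (dv z q) + nrm N (dv w q)) * nrm N (dv z w) <= 2 * C * nrm N (dv z w)).
  { apply Rmult_le_compat_r; auto. nra. }
  replace (peval z P - peval w P) with ((peval z P - peval w P - L) + L) by ring.
  eapply Rle_trans; [apply Rabs_triang|]. lra.
Qed.

Lemma taylor_bounded N q P C : 0 <= C -> taylor_bound N q P C ->
  forall z, nrm N (dv z q) <= 1 -> Rabs (peval z P) <= Rabs (peval q P) + (gradn N q P + 2 * C).
Proof.
  intros HC HT z Hz. assert (Hq : nrm N (dv q q) <= 1) by (rewrite nrm_self; lra).
  pose proof (taylor_lipschitz N q P C HC HT z q Hz Hq). pose proof (gradn_nonneg N q P).
  assert ((gradn N q P + 2 * C) * nrm N (dv z q) <= gradn N q P + 2 * C).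
  { rewrite <- (Rmult_1_r (gradn N q P + 2 * C)) at 2. apply Rmult_le_compat_l; lra. }
  replace (peval z P) with ((peval z P - peval q P) + peval q P) by ring.
  eapply Rle_trans; [apply Rabs_triang|]. lra.
Qed.

Lemma taylor_bound_mono N q P C C' : C <= C' -> taylor_bound N q P C -> taylor_bound N q P C'.
Proof.
  intros HC T z w Hz Hw. eapply Rle_trans; [apply T; auto|].
  pose proof (nrm_nonneg N (dv z q)). pose proof (nrm_nonneg N (dv w q)). pose proof (nrm_nonneg N (dv z w)).
  apply Rmult_le_compat_r; auto. apply Rmult_le_compat_r; lra.
Qed.

Lemma taylor_add N q P1 P2 C1 C2 : taylor_bound N q P1 C1 -> taylor_bound N q P2 C2 ->
  taylor_bound N q (PAdd P1 P2) (C1 + C2).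
Proof.
  intros T1 T2 z w Hz Hw. specialize (T1 z w Hz Hw). specialize (T2 z w Hz Hw). simpl.
  rewrite (Rsum_ext N _ (fun t => peval q (pderiv t P1) * (z t - w t) + peval q (pderiv t P2) * (z t - w t)))
    by (intros; simpl; ring).
  rewrite Rsum_plus.
  match goal with |- Rabs ?e <= _ => replace e with
    ((peval z P1 - peval w P1 - Rsum N (fun t => peval q (pderiv t P1) * (z t - w t))) +
     (peval z P2 - peval w P2 - Rsum N (fun t => peval q (pderiv t P2) * (z t - w t)))) by ring end.
  eapply Rle_trans; [apply Rabs_triang|]. lra.
Qed.

Lemma taylor_opp N q P C : taylor_bound N q P C -> taylor_bound N q (POpp P) C.
Proof.
  intros T z w Hz Hw. specialize (T z w Hz Hw). simpl.
  rewrite (Rsum_ext N _ (fun t => - (peval q (pderiv t P) * (z t - w t)))) by (intros; simpl; ring).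
  rewrite Rsum_opp, <- Rabs_Ropp.
  match goal with |- Rabs ?e <= _ => replace e with
    (peval z P - peval w P - Rsum N (fun t => peval q (pderiv t P) * (z t - w t))) by ring end.
  exact T.
Qed.

(** The estimate behind the product rule, based on
    ab - a'b' - (b0 Da + a0 Db) = a (b - b' - Db) + (a - a0) Db
                                + b' (a - a' - Da) + (b' - b0) Da. *)
Lemma product_remainder a a' a0 b b' b0 Da Db B1 B2 L1 L2 A1 A2 R1 R2 e1 e2 d :
  0 <= e1 -> 0 <= e2 -> 0 <= L1 -> 0 <= L2 ->
  Rabs a <= B1 -> Rabs b' <= B2 -> Rabs (a - a0) <= L1 * e1 -> Rabs (b' - b0) <= L2 * e2 ->
  Rabs (a - a' - Da) <= R1 -> Rabs (b - b' - Db) <= R2 ->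
  Rabs Da <= A1 * d -> Rabs Db <= A2 * d ->
  Rabs (a * b - a' * b' - (b0 * Da + a0 * Db))
    <= B1 * R2 + B2 * R1 + L1 * (e1 + e2) * (A2 * d) + L2 * (e1 + e2) * (A1 * d).
Proof.
  intros He1 He2 HL1 HL2 Ha Hb Ha0 Hb0 HR1 HR2 HDa HDb.
  replace (a * b - a' * b' - (b0 * Da + a0 * Db)) with
    (a * (b - b' - Db) + (a - a0) * Db + b' * (a - a' - Da) + (b' - b0) * Da) by ring.
  assert (Habs : forall x y X Y, Rabs x <= X -> Rabs y <= Y -> Rabs (x * y) <= X * Y).
  { intros. rewrite Rabs_mult. apply Rmult_le_compat; auto using Rabs_pos. }
  pose proof (Habs _ _ _ _ Ha HR2). pose proof (Habs _ _ _ _ Hb HR1).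
  assert (Rabs ((a - a0) * Db) <= L1 * (e1 + e2) * (A2 * d)).
  { apply Habs; auto. eapply Rle_trans; [exact Ha0|]. apply Rmult_le_compat_l; lra. }
  assert (Rabs ((b' - b0) * Da) <= L2 * (e1 + e2) * (A1 * d)).
  { apply Habs; auto. eapply Rle_trans; [exact Hb0|]. apply Rmult_le_compat_l; lra. }
  eapply Rle_trans; [apply Rabs_triang|].
  eapply Rle_trans; [apply Rplus_le_compat_r, Rabs_triang|].
  eapply Rle_trans; [apply Rplus_le_compat_r, Rplus_le_compat_r, Rabs_triang|]. lra.
Qed.

Lemma taylor_mul N q P1 P2 C1 C2 : 0 <= C1 -> 0 <= C2 ->
  taylor_bound N q P1 C1 -> taylor_bound N q P2 C2 ->
  exists C, 0 <= C /\ taylor_bound N q (PMul P1 P2) C.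
Proof.
  intros HC1 HC2 T1 T2.
  set (A1 := gradn N q P1). set (A2 := gradn N q P2).
  set (L1 := A1 + 2 * C1). set (L2 := A2 + 2 * C2).
  set (B1 := Rabs (peval q P1) + L1). set (B2 := Rabs (peval q P2) + L2).
  assert (0 <= A1 /\ 0 <= A2) as [HA1 HA2] by (split; apply gradn_nonneg).
  assert (0 <= B1 /\ 0 <= B2) as [HB1 HB2].
  { pose proof (Rabs_pos (peval q P1)). pose proof (Rabs_pos (peval q P2)). unfold B1, B2, L1, L2; lra. }
  exists (B1 * C2 + B2 * C1 + L1 * A2 + L2 * A1). split; [unfold L1, L2; nra|]. intros z w Hz Hw.
  assert (Hq : nrm N (dv q q) <= 1) by (rewrite nrm_self; lra).
  pose proof (lin_bound N (fun t => peval q (pderiv t P1)) (dv z w)) as Ia.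
  pose proof (lin_bound N (fun t => peval q (pderiv t P2)) (dv z w)) as Ib.
  cbv beta in Ia, Ib. fold (gradn N q P1) (gradn N q P2) in Ia, Ib. fold A1 A2 in Ia, Ib.
  simpl. rewrite (Rsum_ext N _ (fun t => peval q P2 * (peval q (pderiv t P1) * (z t - w t)) +
                                          peval q P1 * (peval q (pderiv t P2) * (z t - w t))))
    by (intros; simpl; ring).
  rewrite Rsum_plus, !Rsum_scal.
  eapply Rle_trans; [apply product_remainder with (L1 := L1) (L2 := L2); try apply nrm_nonneg;
    [unfold L1; lra | unfold L2; lra | apply (taylor_bounded N q P1 C1) | apply (taylor_bounded N q P2 C2)
    | apply (taylor_lipschitz N q P1 C1) | apply (taylor_lipschitz N q P2 C2)
    | apply T1 | apply T2 | exact Ia | exact Ib]; auto|].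
  apply Req_le. unfold B1, B2, L1, L2, A1, A2. ring.
Qed.

Lemma taylor N q P : poly_in N P -> exists C, 0 <= C /\ taylor_bound N q P C.
Proof.
  induction P as [c|i|P1 IH1 P2 IH2|P1 IH1 P2 IH2|P IH]; simpl; intros HP.
  - exists 0. split; [lra|]. intros z w _ _. simpl.
    rewrite Rsum_zero by (intros; simpl; ring). rewrite Rminus_diag, Rminus_0_r, Rabs_R0. lra.
  - exists 0. split; [lra|]. intros z w _ _. simpl.
    rewrite (Rsum_ext N _ (fun t => if Nat.eqb t i then z t - w t else 0)), Rsum_delta by
      (auto; intros t _; destruct (Nat.eqb t i); simpl; ring).
    rewrite Rminus_diag, Rabs_R0. lra.
  - destruct HP as [H1 H2]. destruct (IH1 H1) as [C1 [HC1 T1]], (IH2 H2) as [C2 [HC2 T2]].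
    exists (C1 + C2). split; [lra|]. apply taylor_add; auto.
  - destruct HP as [H1 H2]. destruct (IH1 H1) as [C1 [HC1 T1]], (IH2 H2) as [C2 [HC2 T2]].
    apply taylor_mul with C1 C2; auto.
  - destruct (IH HP) as [C [HC T]]. exists C. split; auto. apply taylor_opp; auto.
Qed.

Lemma taylor_uniform N q G : (forall i, (i < N)%nat -> poly_in N (G i)) ->
  exists C, 0 <= C /\ forall i, (i < N)%nat -> taylor_bound N q (G i) C.
Proof.
  intros H. enough (forall m, (m <= N)%nat ->
    exists C, 0 <= C /\ forall i, (i < m)%nat -> taylor_bound N q (G i) C) by auto.
  induction m as [|m IH]; intros Hm; [exists 0; split; [lra | intros; lia]|].
  destruct (IH ltac:(lia)) as [C [HC HT]], (taylor N q (G m) (H m ltac:(lia))) as [C' [HC' HT']].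
  exists (Rmax C C'). split; [eapply Rle_trans; [apply HC | apply Rmax_l]|].
  intros i Hi. destruct (Nat.eq_dec i m) as [->|].
  - eapply taylor_bound_mono; [apply Rmax_r | exact HT'].
  - eapply taylor_bound_mono; [apply Rmax_l | apply HT; lia].
Qed.

(** ** The Newton map of a polynomial map at a regular point *)

Definition jac_mx (G : nat -> mpoly) (q : nat -> R) : nat -> nat -> R :=
  fun i t => peval q (pderiv t (G i)).

Section Newton.
Variables (N : nat) (G : nat -> mpoly) (q : nat -> R) (M : nat -> nat -> R).

(** z ↦ z - M (G z - y): its fixed points solve G z = y when M is invertible *)
Definition newton (y z : nat -> R) : nat -> R :=
  fun t => z t - Rsum N (fun i => M t i * (peval z (G i) - y i)).

Lemma newton_solution y z : solves N G y z -> eqv N (newton y z) z.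
Proof. intros H t Ht. unfold newton. rewrite Rsum_zero; [ring|]. intros i Hi. rewrite H by auto. ring. Qed.

Lemma newton_center y : is_zero_of N G q ->
  nrm N (dv (newton y q) q) <= mx_bound N M * nrm N y.
Proof.
  intros Hq. eapply Rle_trans; [|apply (mx_bound_spec N M y)]. right. apply nrm_ext. intros t Ht.
  unfold dv, newton. rewrite (Rsum_ext N _ (fun i => - (M t i * y i))), Rsum_opp; [ring|].
  intros i Hi. rewrite Hq by auto. ring.
Qed.

Hypothesis M_left : forall i j, (i < N)%nat -> (j < N)%nat ->
  Rsum N (fun t => M i t * jac_mx G q t j) = if Nat.eqb i j then 1 else 0.
Hypothesis M_right : forall i j, (i < N)%nat -> (j < N)%nat ->
  Rsum N (fun t => jac_mx G q i t * M t j) = if Nat.eqb i j then 1 else 0.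

Lemma newton_fixed_point_solves y z : eqv N (newton y z) z -> solves N G y z.
Proof.
  intros Hf i0 Hi0.
  assert (Hz : forall t, (t < N)%nat -> Rsum N (fun i => M t i * (peval z (G i) - y i)) = 0).
  { intros t Ht. specialize (Hf t Ht). unfold newton in Hf. lra. }
  assert (E : Rsum N (fun t => jac_mx G q i0 t * Rsum N (fun i => M t i * (peval z (G i) - y i))) = 0).
  { apply Rsum_zero. intros t Ht. rewrite Hz by auto. ring. }
  rewrite (Rsum_ext N _ (fun t => Rsum N (fun i => jac_mx G q i0 t * M t i * (peval z (G i) - y i)))),
    Rsum_swap in E by (intros; rewrite <- Rsum_scal; apply Rsum_ext; intros; ring).
  rewrite (Rsum_ext N _ (fun i => if Nat.eqb i i0 then peval z (G i) - y i else 0)), Rsum_delta in E.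
  - lra.
  - exact Hi0.
  - intros i Hi. rewrite (Rsum_ext N _ (fun t => (peval z (G i) - y i) * (jac_mx G q i0 t * M t i)))
      by (intros; ring).
    rewrite Rsum_scal, M_right, Nat.eqb_sym by auto. destruct (Nat.eqb i i0); ring.
Qed.

Lemma newton_lipschitz C y z w :
  (forall i, (i < N)%nat -> taylor_bound N q (G i) C) ->
  nrm N (dv z q) <= 1 -> nrm N (dv w q) <= 1 ->
  nrm N (dv (newton y z) (newton y w)) <=
    mx_bound N M * (INR N * (C * (nrm N (dv z q) + nrm N (dv w q)) * nrm N (dv z w))).
Proof.
  intros HT Hz Hw.
  set (rem := fun i => peval z (G i) - peval w (G i) - Rsum N (fun s => jac_mx G q i s * (z s - w s))).
  assert (Hrem : nrm N rem <= INR N * (C * (nrm N (dv z q) + nrm N (dv w q)) * nrm N (dv z w))).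
  { rewrite <- Rsum_const. apply Rsum_le. intros i Hi. apply (HT i Hi z w Hz Hw). }
  eapply Rle_trans; [|apply Rmult_le_compat_l; [apply mx_bound_nonneg | exact Hrem]].
  eapply Rle_trans; [|apply (mx_bound_spec N M rem)]. right. apply Rsum_ext. intros t Ht.
  unfold dv, newton. rewrite <- Rabs_Ropp. f_equal.
  assert (Hlin : Rsum N (fun i => M t i * Rsum N (fun s => jac_mx G q i s * (z s - w s))) = z t - w t).
  { rewrite (Rsum_ext N _ (fun i => Rsum N (fun s => M t i * jac_mx G q i s * (z s - w s))))
      by (intros; rewrite <- Rsum_scal; apply Rsum_ext; intros; ring).
    rewrite Rsum_swap, (Rsum_ext N _ (fun s => if Nat.eqb s t then z s - w s else 0)), Rsum_delta; auto.
    intros s Hs. rewrite (Rsum_ext N _ (fun i => (z s - w s) * (M t i * jac_mx G q i s))) by (intros; ring).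
    rewrite Rsum_scal, M_left, Nat.eqb_sym by auto. destruct (Nat.eqb s t); ring. }
  match goal with |- - (z t - ?S1 - (w t - ?S2)) = _ =>
    replace (- (z t - S1 - (w t - S2))) with (S1 - S2 - (z t - w t)) by ring end.
  rewrite <- Hlin, <- !Rsum_minus. apply Rsum_ext. intros i _. unfold rem. ring.
Qed.
End Newton.

(** ** A fixed point theorem for 1/2-contractions of an l1-ball *)

Lemma half_pow_pos m : 0 < (1/2) ^ m.
Proof. apply pow_lt; lra. Qed.

Lemma half_pow_small c e : 0 < e -> exists m, c * (1/2) ^ m < e.
Proof.
  intros He. destruct (Rle_lt_dec c 0).
  - exists 0%nat. simpl. lra.
  - destruct (pow_lt_1_zero (1/2)) with (y := e / c) as [m Hm].
    + rewrite Rabs_right; lra.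
    + apply Rdiv_lt_0_compat; lra.
    + exists m. specialize (Hm m (le_n _)). rewrite Rabs_right in Hm by (left; apply half_pow_pos).
      apply (Rmult_lt_compat_l c) in Hm; auto. replace (c * (e / c)) with e in Hm by (field; lra). auto.
Qed.

Lemma le_up_to_half_pow x a c : (forall m, x <= a + c * (1/2) ^ m) -> x <= a.
Proof.
  intros H. apply Rle_plus_epsilon. intros e He.
  destruct (half_pow_small c e He) as [m Hm]. specialize (H m). lra.
Qed.

Lemma geometric_limit N (U : nat -> nat -> R) K : 0 <= K ->
  (forall m j t, (t < N)%nat -> Rabs (U (m + j)%nat t - U m t) <= K * (1/2) ^ m) ->
  exists L : nat -> R, forall m t, (t < N)%nat -> Rabs (U m t - L t) <= K * (1/2) ^ m.
Proof.
  intros HK HU. set (V := fun t m => if Nat.ltb t N then U m t else 0).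
  assert (HV : forall m j t, Rabs (V t (m + j)%nat - V t m) <= K * (1/2) ^ m).
  { intros m j t. unfold V. destruct (Nat.ltb_spec t N); [auto|].
    rewrite Rminus_diag, Rabs_R0. pose proof (half_pow_pos m). nra. }
  assert (HC : forall t, Cauchy_crit (V t)).
  { intros t e He. destruct (half_pow_small (2 * K) e He) as [m0 Hm0].
    exists m0. intros a b Ha Hb. unfold Rdist.
    pose proof (HV m0 (a - m0)%nat t) as H1. pose proof (HV m0 (b - m0)%nat t) as H2.
    replace (m0 + (a - m0))%nat with a in H1 by lia. replace (m0 + (b - m0))%nat with b in H2 by lia.
    replace (V t a - V t b) with ((V t a - V t m0) - (V t b - V t m0)) by ring.
    eapply Rle_lt_trans; [apply Rabs_triang|]. rewrite Rabs_Ropp. lra. }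
  exists (fun t => proj1_sig (R_complete _ (HC t))). intros m t Ht.
  destruct (R_complete _ (HC t)) as [l Hl]. simpl.
  apply Rle_plus_epsilon. intros e He. destruct (Hl e He) as [m1 Hm1].
  specialize (Hm1 (m + m1)%nat ltac:(lia)). unfold Rdist in Hm1. specialize (HV m m1 t).
  unfold V in *. destruct (Nat.ltb_spec t N); [|lia].
  replace (U m t - l) with (- (U (m + m1)%nat t - U m t) + (U (m + m1)%nat t - l)) by ring.
  eapply Rle_trans; [apply Rabs_triang|]. rewrite Rabs_Ropp. lra.
Qed.

Section FixedPoint.
Variables (N : nat) (T : (nat -> R) -> nat -> R) (q : nat -> R) (rho : R).
Hypothesis T_contr : forall z w, nrm N (dv z q) <= rho -> nrm N (dv w q) <= rho ->
  nrm N (dv (T z) (T w)) <= / 2 * nrm N (dv z w).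

Let D := nrm N (dv (T q) q).
Hypothesis T_center : 2 * D <= rho.

Let U (m : nat) := Nat.iter m T q.

Let D_geom_nonneg m : 0 <= D * (1/2) ^ m.
Proof. apply Rmult_le_pos; [apply nrm_nonneg | left; apply half_pow_pos]. Qed.

Lemma iterates_bound m :
  nrm N (dv (U m) q) <= 2 * D - 2 * D * (1/2) ^ m /\ nrm N (dv (U (S m)) (U m)) <= D * (1/2) ^ m.
Proof.
  induction m as [|m [IH1 IH2]].
  - simpl. rewrite nrm_self. unfold D. lra.
  - assert (Hm : nrm N (dv (U (S m)) q) <= 2 * D - 2 * D * (1/2) ^ S m).
    { eapply Rle_trans; [apply (nrm_tri N _ (U m))|]. simpl pow. lra. }
    split; [exact Hm|].
    pose proof (D_geom_nonneg m). pose proof (D_geom_nonneg (S m)).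
    eapply Rle_trans; [apply (T_contr (U (S m)) (U m)); lra|]. simpl pow. lra.
Qed.

Lemma iterates_cauchy m j : nrm N (dv (U (m + j)%nat) (U m)) <= 2 * D * (1/2) ^ m.
Proof.
  enough (nrm N (dv (U (m + j)%nat) (U m)) <= 2 * D * (1/2) ^ m - 2 * D * (1/2) ^ (m + j)).
  { pose proof (D_geom_nonneg (m + j)). lra. }
  induction j as [|j IH].
  - rewrite Nat.add_0_r, nrm_self. lra.
  - rewrite Nat.add_succ_r. eapply Rle_trans; [apply (nrm_tri N _ (U (m + j)%nat))|].
    pose proof (proj2 (iterates_bound (m + j))). simpl pow. lra.
Qed.

Theorem contraction_fixed_point : exists z, nrm N (dv z q) <= 2 * D /\ eqv N (T z) z.
Proof.
  assert (HD : 0 <= D) by apply nrm_nonneg.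
  destruct (geometric_limit N U (2 * D)) as [L HL]; [lra| |].
  { intros m j t Ht. eapply Rle_trans; [apply (coord_le_nrm N (dv _ _) t Ht)|]. apply iterates_cauchy. }
  assert (HUL : forall m, nrm N (dv (U m) L) <= INR N * (2 * D) * (1/2) ^ m).
  { intros m. rewrite Rmult_assoc, <- Rsum_const. apply Rsum_le. intros t Ht. apply HL, Ht. }
  assert (HLq : nrm N (dv L q) <= 2 * D).
  { apply (le_up_to_half_pow _ _ (INR N * (2 * D))). intros m.
    eapply Rle_trans; [apply (nrm_tri N _ (U m))|]. rewrite nrm_sym.
    pose proof (HUL m). pose proof (proj1 (iterates_bound m)). pose proof (half_pow_pos m). nra. }
  exists L. split; [exact HLq|]. apply nrm_zero_eqv.
  apply (le_up_to_half_pow _ _ (INR N * (2 * D))). intros m.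
  assert (HUm : nrm N (dv (U m) q) <= rho).
  { pose proof (proj1 (iterates_bound m)). pose proof (D_geom_nonneg m). lra. }
  pose proof (T_contr L (U m) ltac:(lra) HUm) as Hc.
  pose proof (HUL (S m)) as H1. pose proof (HUL m) as H2. rewrite nrm_sym in H2.
  change (U (S m)) with (T (U m)) in H1. simpl pow in H1.
  eapply Rle_trans; [apply (nrm_tri N _ (T (U m)))|].
  set (K := INR N * (2 * D)) in *. set (pm := (1/2) ^ m) in *. lra.
Qed.
End FixedPoint.

(** ** Local degree at a regular zero *)

Lemma sgnZ_close a b : Rabs (a - b) < Rabs b -> sgnZ a = sgnZ b.
Proof.
  intros H. unfold sgnZ, Rabs in *.
  destruct (Rcase_abs (a - b)), (Rcase_abs b), (Rlt_dec 0 a), (Rlt_dec 0 b);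
  try reflexivity; destruct (Rlt_dec a 0), (Rlt_dec b 0); try reflexivity; lra.
Qed.

Lemma distinct_equivalent_singleton N (zs : list (nat -> R)) z0 :
  zs <> nil -> (forall w, In w zs -> eqv N w z0) ->
  ForallOrdPairs (fun u v => ~ eqv N u v) zs -> exists w, zs = w :: nil.
Proof.
  intros Hne Hall Hd. destruct zs as [|w1 [|w2 zs]]; [easy | eauto|].
  exfalso. inversion Hd as [|? ? Hw1]; subst. inversion Hw1 as [|? ? H12]; subst.
  apply H12. intros t Ht. rewrite (Hall w1), (Hall w2); simpl; auto.
Qed.

Section RegularZero.
Variables (N : nat) (G : nat -> mpoly) (q : nat -> R).
Hypothesis G_poly : forall i, (i < N)%nat -> poly_in N (G i).
Hypothesis q_zero : is_zero_of N G q.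
Hypothesis q_regular : jac N G q <> 0.

Lemma regular_neighbourhood : exists M rho, 0 < rho /\
  (forall i j, (i < N)%nat -> (j < N)%nat ->
     Rsum N (fun t => jac_mx G q i t * M t j) = if Nat.eqb i j then 1 else 0) /\
  (forall y z w, nrm N (dv z q) <= rho -> nrm N (dv w q) <= rho ->
     nrm N (dv (newton N G M y z) (newton N G M y w)) <= / 2 * nrm N (dv z w)) /\
  (forall z, nrm N (dv z q) <= rho -> sgnZ (jac N G z) = sgnZ (jac N G q)).
Proof.
  destruct (Matrices.inverse_exists N (jac_mx G q)) as [M [HML HMR]]; [exact q_regular|].
  destruct (taylor_uniform N q G G_poly) as [C [HC HT]].
  set (PJ := Pdet N (fun i j => pderiv j (G i))).
  assert (HPJ : forall z, jac N G z = peval z PJ) by (intros; unfold jac, PJ; rewrite peval_Pdet; auto).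
  destruct (taylor N q PJ) as [CJ [HCJ HTJ]].
  { apply poly_in_Pdet. intros; apply poly_in_pderiv; auto. }
  set (X := mx_bound N M * INR N * C). set (LJ := gradn N q PJ + 2 * CJ).
  assert (HX : 0 <= X) by (unfold X; pose proof (mx_bound_nonneg N M); pose proof (pos_INR N);
    repeat apply Rmult_le_pos; auto).
  assert (HLJ : 0 <= LJ) by (unfold LJ; pose proof (gradn_nonneg N q PJ); lra).
  assert (Hj : 0 < Rabs (jac N G q)) by (apply Rabs_pos_lt; auto).
  set (rho := Rmin 1 (Rmin (/ (4 * (X + 1))) (Rabs (jac N G q) / (2 * (LJ + 1))))).
  assert (Hrho1 : rho <= 1) by apply Rmin_l.
  assert (Hrho2 : rho * (4 * (X + 1)) <= 1).
  { assert (Hr : rho <= / (4 * (X + 1))) by (eapply Rle_trans; [apply Rmin_r | apply Rmin_l]).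
    apply (Rmult_le_compat_r (4 * (X + 1))) in Hr; [|lra]. rewrite Rinv_l in Hr; lra. }
  assert (Hrho3 : rho * (2 * (LJ + 1)) <= Rabs (jac N G q)).
  { assert (Hr : rho <= Rabs (jac N G q) / (2 * (LJ + 1)))
      by (eapply Rle_trans; [apply Rmin_r | apply Rmin_r]).
    apply (Rmult_le_compat_r (2 * (LJ + 1))) in Hr; [|lra].
    unfold Rdiv in Hr. rewrite Rmult_assoc, Rinv_l, Rmult_1_r in Hr; lra. }
  assert (Hrho0 : 0 < rho).
  { apply Rmin_glb_lt; [lra|]. apply Rmin_glb_lt; [apply Rinv_0_lt_compat; lra|].
    apply Rdiv_lt_0_compat; lra. }
  exists M, rho. repeat split; auto.
  - intros y z w Hz Hw. eapply Rle_trans; [apply (newton_lipschitz N G q M HML C); auto; lra|].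
    pose proof (nrm_nonneg N (dv z q)). pose proof (nrm_nonneg N (dv w q)).
    pose proof (nrm_nonneg N (dv z w)). fold X.
    replace (mx_bound N M * (INR N * (C * (nrm N (dv z q) + nrm N (dv w q)) * nrm N (dv z w))))
      with (X * (nrm N (dv z q) + nrm N (dv w q)) * nrm N (dv z w)) by (unfold X; ring).
    apply Rmult_le_compat_r; auto. nra.
  - intros z Hz. apply sgnZ_close. rewrite !HPJ.
    assert (Hq : nrm N (dv q q) <= 1) by (rewrite nrm_self; lra).
    eapply Rle_lt_trans; [apply (taylor_lipschitz N q PJ CJ); auto; lra|].
    rewrite <- HPJ. fold LJ. pose proof (nrm_nonneg N (dv z q)). nra.
Qed.

Section Neighbourhood.
Variables (M : nat -> nat -> R) (rho : R).
Hypothesis M_right : forall i j, (i < N)%nat -> (j < N)%nat ->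
  Rsum N (fun t => jac_mx G q i t * M t j) = if Nat.eqb i j then 1 else 0.
Hypothesis newton_contr : forall y z w, nrm N (dv z q) <= rho -> nrm N (dv w q) <= rho ->
  nrm N (dv (newton N G M y z) (newton N G M y w)) <= / 2 * nrm N (dv z w).

(** two solutions of G z = y in the ball coincide: both are fixed points of a contraction *)
Lemma solution_unique y z w : nrm N (dv z q) <= rho -> nrm N (dv w q) <= rho ->
  solves N G y z -> solves N G y w -> eqv N z w.
Proof.
  intros Hz Hw Sz Sw. apply nrm_zero_eqv.
  assert (E : nrm N (dv z w) = nrm N (dv (newton N G M y z) (newton N G M y w))).
  { apply nrm_ext. intros t Ht. unfold dv. rewrite !newton_solution; auto. }
  pose proof (newton_contr y z w Hz Hw). pose proof (nrm_nonneg N (dv z w)). lra.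
Qed.

Lemma solution_exists y : 2 * (mx_bound N M * nrm N y) <= rho ->
  exists z, nrm N (dv z q) <= 2 * (mx_bound N M * nrm N y) /\ solves N G y z.
Proof.
  intros Hy. pose proof (newton_center N G q M y q_zero) as Hc.
  destruct (contraction_fixed_point N (newton N G M y) q rho (newton_contr y)) as [z [Hz Hfix]].
  - lra.
  - exists z. split; [lra|]. apply (newton_fixed_point_solves N G q M M_right y z Hfix).
Qed.
End Neighbourhood.

Theorem regular_zero_degree :
  isolated_zero N G q /\ local_degree N G q (sgnZ (jac N G q)).
Proof.
  destruct regular_neighbourhood as (M & rho & Hrho & HMR & Hcontr & Hsign).
  assert (0 <= INR N) by apply pos_INR.
  assert (0 <= mx_bound N M) by apply mx_bound_nonneg.
  (* the Euclidean ball of radius r lies in the contraction ball *)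
  set (r := rho / (INR N + 1)). assert (Hr : 0 < r) by (apply Rdiv_lt_0_compat; lra).
  assert (Hr' : r * (INR N + 1) = rho) by (unfold r; field; lra).
  assert (Hr_rho : r <= rho) by nra.
  assert (Hball : forall z, dist2 N z q <= r ^ 2 -> nrm N (dv z q) <= rho).
  { intros z Hz. eapply Rle_trans; [apply (nrm_le_of_dist2 N z q r); lra | lra]. }
  assert (Hq : nrm N (dv q q) <= rho) by (rewrite nrm_self; lra).
  assert (Hiso : forall z, dist2 N z q <= r ^ 2 -> is_zero_of N G z -> eqv N z q).
  { intros z Hz Z. apply (solution_unique M rho Hcontr (fun _ => 0)); auto. }
  split; [split; [exact q_zero | exists r; split; [exact Hr | intros; apply Hiso; auto; lra]]|].
  exists r. split; [exact Hr|]. split; [exact Hiso|].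
  (* a right-hand side within eps of 0 has its preimage within r of q *)
  set (eps := r / (2 * (mx_bound N M + 1) * (INR N + 1))). exists eps.
  assert (He : 0 < eps) by (unfold eps; apply Rdiv_lt_0_compat; nra).
  assert (He' : eps * (2 * (mx_bound N M + 1) * (INR N + 1)) = r) by (unfold eps; field; lra).
  split; [exact He|]. intros y Hy _ zs Hzs Hnd.
  assert (Hny : 2 * (mx_bound N M * nrm N y) < r).
  { pose proof (nrm_le_of_dist2 N y (fun _ => 0) eps ltac:(lra) ltac:(lra)) as Hn.
    rewrite (nrm_ext N (dv y (fun _ => 0)) y) in Hn by (intros; unfold dv; ring).
    apply Rle_lt_trans with (2 * (mx_bound N M * (INR N * eps))); [pose proof (nrm_nonneg N y); nra | nra]. }
  destruct (solution_exists M rho HMR Hcontr y ltac:(lra)) as [z0 [Hz0 Sz0]].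
  assert (Hz0r : dist2 N z0 q < r ^ 2).
  { eapply Rle_lt_trans; [apply dist2_le_nrm|]. pose proof (nrm_nonneg N (dv z0 q)).
    nra. }
  assert (Hall : forall w, In w zs -> eqv N w z0 /\ dist2 N w q < r ^ 2).
  { intros w Hw. destruct (proj2 (Hzs w)) as [Hwr Sw]; [exists w; split; [exact Hw | easy]|].
    split; [|exact Hwr]. apply (solution_unique M rho Hcontr y); auto; apply Hball; lra. }
  assert (Hne : zs <> nil).
  { destruct (proj1 (Hzs z0) (conj Hz0r Sz0)) as [w [Hw _]]. intros ->. destruct Hw. }
  destruct (distinct_equivalent_singleton N zs z0 Hne (fun w Hw => proj1 (Hall w Hw)) Hnd)
    as [w ->].
  simpl. rewrite Z.add_0_r. apply Hsign, Hball. left. apply Hall. now left.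
Qed.
End RegularZero.

(** ** The Jacobian of F and the value of δ at (λ̄, p) *)

Lemma sgnZ_mul x y : sgnZ (x * y) = (sgnZ x * sgnZ y)%Z.
Proof.
  unfold sgnZ.
  destruct (Rlt_dec 0 x), (Rlt_dec x 0), (Rlt_dec 0 y), (Rlt_dec y 0);
  destruct (Rlt_dec 0 (x * y)), (Rlt_dec (x * y) 0); try reflexivity; try lra; try (exfalso; nra).
  all: try (assert (x = 0) by lra; subst; rewrite Rmult_0_l in *; lra).
  all: assert (y = 0) by lra; subst; rewrite Rmult_0_r in *; lra.
Qed.

Lemma sgnZ_pos x : 0 < x -> sgnZ x = 1%Z.
Proof. intros; unfold sgnZ; destruct (Rlt_dec 0 x); [reflexivity | lra]. Qed.

Lemma sgnZ_sg j : sgnZ (sg j) = ((-1) ^ Z.of_nat j)%Z.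
Proof.
  induction j as [|j IH]; [unfold sgnZ, sg; simpl; destruct (Rlt_dec 0 1); [reflexivity | lra]|].
  rewrite Nat2Z.inj_succ, Z.pow_succ_r, <- IH by lia. unfold sg, sgnZ.
  rewrite Nat.even_succ, <- Nat.negb_even. destruct (Nat.even j); simpl;
  repeat destruct Rlt_dec; try reflexivity; lra.
Qed.

Lemma sgnZ_odd_power K N x s : Nat.Odd N -> x <> 0 ->
  ((-1) ^ Z.of_nat K * sgnZ ((sg K * x) ^ N * s))%Z = sgnZ (x * s).
Proof.
  intros [h ->] Hx.
  assert (Hpos : 0 < ((sg K * x) ^ 2) ^ h).
  { apply pow_lt. assert (sg K * x <> 0) by (apply Rmult_integral_contrapositive; split;
      [unfold sg; destruct (Nat.even K); lra | exact Hx]). nra. }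
  replace ((sg K * x) ^ (2 * h + 1) * s) with (sg K * (((sg K * x) ^ 2) ^ h * (x * s))).
  - rewrite !sgnZ_mul, (sgnZ_pos _ Hpos), sgnZ_sg.
    rewrite Z.mul_1_l, Z.mul_assoc, <- Z.pow_mul_l. simpl Z.mul. rewrite Z.pow_1_l by lia. ring.
  - rewrite pow_add, pow_mult. ring.
Qed.

Section Jacobian.
Variables (K : nat) (a : nat -> nat -> mpoly) (p lam : nat -> R).

(** entry (i, t) of the Jacobian of F at (λ, p): ∂F_i/∂λ_(t+2) = a_(i,t+2)(p)
    for t < K, and ∂F_i/∂x_(l+1) = ∂_l a_(i1)(p) + Σ_j λ_j ∂_l a_(i,j+1)(p)
    for t = K + l *)
Definition jac_F (i t : nat) : R :=
  if Nat.ltb t K then peval p (a i (S t))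
  else peval p (pderiv (t - K) (a i O))
       + Rsum K (fun j => lam j * peval p (pderiv (t - K) (a i (S j)))).

Let q := join_pt (S K) lam p.

Lemma join_pt_low j : (j < K)%nat -> q j = lam j.
Proof. intros H. unfold q, join_pt. replace (S K - 1)%nat with K by lia. destruct (Nat.ltb_spec j K); [reflexivity | lia]. Qed.

Lemma join_pt_high u : q (u + K)%nat = p u.
Proof.
  unfold q, join_pt. replace (S K - 1)%nat with K by lia.
  destruct (Nat.ltb_spec (u + K) K); [lia|]. f_equal; lia.
Qed.

Lemma peval_shifted P : peval q (prename (fun u => (u + K)%nat) P) = peval p P.
Proof. rewrite peval_prename. apply peval_ext. intros; apply join_pt_high. Qed.

Lemma F_poly_eval i : peval q (F_poly (S K) a i)
  = peval p (a i O) + Rsum K (fun j => lam j * peval p (a i (S j))).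
Proof.
  unfold F_poly. replace (S K - 1)%nat with K by lia. simpl.
  rewrite peval_gsum, peval_shifted. f_equal. apply Rsum_ext. intros j Hj. simpl.
  rewrite peval_shifted, join_pt_low by exact Hj. reflexivity.
Qed.

Lemma F_poly_jacobian i t : peval q (pderiv t (F_poly (S K) a i)) = jac_F i t.
Proof.
  unfold F_poly, jac_F. replace (S K - 1)%nat with K by lia. simpl.
  rewrite pderiv_gsum, peval_gsum.
  destruct (Nat.ltb_spec t K) as [Ht|Ht].
  - rewrite pderiv_prename_missed by lia.
    rewrite (Rsum_ext K _ (fun j => if Nat.eqb j t then peval p (a i (S j)) else 0)), Rsum_delta
      by (auto; intros j Hj; simpl; rewrite pderiv_prename_missed, peval_shifted by lia;
          rewrite Nat.eqb_sym; destruct (Nat.eqb j t); simpl; ring).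
    ring.
  - replace t with ((t - K) + K)%nat at 1 by lia. rewrite pderiv_prename_shift, peval_shifted.
    f_equal. apply Rsum_ext. intros j Hj. simpl.
    destruct (Nat.eqb_spec t j); [lia|].
    replace t with ((t - K) + K)%nat at 1 by lia.
    rewrite pderiv_prename_shift, !peval_shifted, join_pt_low by exact Hj. simpl. ring.
Qed.

Lemma m_poly_value : peval p (m_poly (S K) a) = Rdet K jac_F.
Proof.
  unfold m_poly. replace (S K - 1)%nat with K by lia. rewrite peval_Pdet.
  apply Rdet_ext. intros r c Hr Hc. unfold jac_F. destruct (Nat.ltb_spec c K); [reflexivity | lia].
Qed.

Lemma jacobian_F_schur n : (K <= n)%nat -> Rdet K jac_F <> 0 ->
  jac n (F_poly (S K) a) q = Rdet K jac_F * Rdet (n - K) (Matrices.schur_complement K jac_F).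
Proof.
  intros Hn Hm. rewrite <- Matrices.det_schur by exact Hm.
  replace (K + (n - K))%nat with n by lia. unfold jac.
  apply Rdet_ext. intros i t _ _. apply F_poly_jacobian.
Qed.

Definition lam_kernel (i : nat) : Prop :=
  peval p (a i O) + Rsum K (fun j => lam j * peval p (a i (S j))) = 0.

Lemma Delta_derivative r l : (forall u, (u < K)%nat -> lam_kernel u) -> lam_kernel (K + r) ->
  peval p (pderiv l (Defs.Delta (S K) a (K + r))) = sg K * Rdet (S K) (Matrices.bordered K jac_F r l).
Proof.
  intros Hlow Hrow. unfold Defs.Delta. replace (S K - 1)%nat with K by lia.
  rewrite peval_pderiv_Pdet. cbv beta.
  rewrite (Matrices.sum_row_replaced_det K
    (fun u v => peval p (a (if Nat.ltb u K then u else (K + r)%nat) v))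
    (fun u v => peval p (pderiv l (a (if Nat.ltb u K then u else (K + r)%nat) v)))
    (fun v => match v with O => 1 | S j => lam j end)).
  - f_equal. apply Rdet_ext. intros u v Hu Hv. unfold Matrices.bordered, jac_F.
    destruct (Nat.ltb_spec v K) as [Hvk|Hvk]; [now rewrite (proj2 (Nat.ltb_lt v K) Hvk)|].
    replace v with K by lia.
    destruct (Nat.ltb_spec (K + l) K); [lia|]. replace (K + l - K)%nat with l by lia.
    rewrite Rsum_S_l. f_equal; [simpl; ring|]. apply Rsum_ext. intros; simpl; ring.
  - reflexivity.
  - intros u Hu. rewrite Rsum_S_l. simpl. rewrite Rmult_1_r.
    assert (Hk : lam_kernel (if Nat.ltb u K then u else (K + r)%nat))
      by (destruct (Nat.ltb_spec u K); auto).
    etransitivity; [|apply Hk]. f_equal. apply Rsum_ext. intros; ring.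
Qed.

Lemma delta_value n : (S K <= n)%nat -> (forall i, (i < n)%nat -> lam_kernel i) ->
  Rdet K jac_F <> 0 ->
  peval p (delta_poly n (S K) a) =
  (sg K * Rdet K jac_F) ^ (n - K) * Rdet (n - K) (Matrices.schur_complement K jac_F).
Proof.
  intros Hn Hker Hm. unfold delta_poly. replace (n - S K + 1)%nat with (n - K)%nat by lia.
  rewrite peval_Pdet, <- Rdet_scal. apply Rdet_ext. intros r l Hr Hl.
  replace (S K - 1 + r)%nat with (K + r)%nat by lia.
  rewrite Delta_derivative, Matrices.det_bordered; [ring | exact Hm | |];
    intros; apply Hker; lia.
Qed.
End Jacobian.

Lemma F_poly_in n K a : (S K <= n)%nat ->
  (forall i j, (i < n)%nat -> (j < S K)%nat -> poly_in (n - S K + 1) (a i j)) ->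
  forall i, (i < n)%nat -> poly_in n (F_poly (S K) a i).
Proof.
  intros Hn Ha i Hi. unfold F_poly. replace (S K - 1)%nat with K by lia.
  assert (Hsh : forall j, (j < S K)%nat -> poly_in n (prename (fun u => (u + K)%nat) (a i j))).
  { intros j Hj. apply (poly_in_prename (n - S K + 1)); [apply Ha; auto | intros; lia]. }
  split; [apply Hsh; lia|]. apply poly_in_gsum. intros j Hj. split; [simpl; lia | apply Hsh; lia].
Qed.

Theorem lemma10 (n k : nat) (a : nat -> nat -> mpoly) (p lam : nat -> R) :
  (2 <= k)%nat -> (k <= n)%nat -> Nat.Even (n - k) ->
  (forall i j, (i < n)%nat -> (j < k)%nat -> poly_in (n - k + 1) (a i j)) ->
  (exists c : nat -> R,
      (exists j, (j < k)%nat /\ c j <> 0) /\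
      forall i, (i < n)%nat -> Rsum k (fun j => peval p (a i j) * c j) = 0) ->
  peval p (m_poly k a) <> 0 ->
  (forall i, (i < n)%nat ->
      peval p (a i O) + Rsum (k - 1) (fun j => lam j * peval p (a i (S j))) = 0) ->
  peval p (delta_poly n k a) <> 0 ->
  isolated_zero n (F_poly k a) (join_pt k lam p) /\
  local_degree n (F_poly k a) (join_pt k lam p)
    (((-1) ^ Z.of_nat (k - 1)) * sgnZ (peval p (delta_poly n k a)))%Z.
Proof.
  intros Hk Hkn [h Hh] Hpoly _ Hm Hlam Hdelta.
  destruct k as [|K]; [lia|]. replace (S K - 1)%nat with K in * by lia.
  rewrite (m_poly_value K a p lam) in Hm.
  pose proof (delta_value K a p lam n Hkn Hlam Hm) as Hdv.
  (* δ(p) ≠ 0 forces det J = m(p) det S ≠ 0 *)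
  assert (Hjac : jac n (F_poly (S K) a) (join_pt (S K) lam p) <> 0).
  { rewrite jacobian_F_schur by (lia || exact Hm). intros E. apply Hdelta. rewrite Hdv.
    destruct (Rmult_integral _ _ E) as [E'|E']; [contradiction | rewrite E'; ring]. }
  (* n - K = n - k + 1 is odd, so (-1)^K sgn δ(p) = sgn det J *)
  rewrite Hdv, sgnZ_odd_power, <- jacobian_F_schur by (lia || exact Hm || (exists h; lia)).
  apply regular_zero_degree; [apply F_poly_in; auto | | exact Hjac].
  intros i Hi. rewrite F_poly_eval. apply Hlam, Hi.
Qed.
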